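(* Let $G$ be a countable discrete group and let $\{\omega_n:G\to U(H_n)\}_{n\geq1}$ be a sequence of unitary representations that separates the points of $G$. Then the left regular representation $\lambda_G$ is weakly contained in the set $\{\iota_G\}\cup\{\omega_{i_1}\otimes\cdots\otimes\omega_{i_n}: 1\leq i_1\leq\cdots\leq i_n,\ n\geq1\}$.
   Context: $\iota_G$ denotes the trivial representation of $G$; separating points means for each $s\neq e$ there is $n$ with $\omega_n(s)\neq1$. *)

From HB Require Import structures.
From mathcomp Require Import all_boot all_order all_algebra.
From mathcomp Require Import reals.
From mathcomp Require Import complex.
Set Implicit Arguments. Unset Strict Implicit. Unset Printing Implicit Defensive.
Import Order.TTheory GRing.Theory Num.Theory.
Local Open Scope ring_scope.
Local Open Scope complex_scope.

Record hilbert (R : realType) := Hilbert {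
  hspace :> lmodType R[i];
  ip : hspace -> hspace -> R[i];
  ipDZl : forall (a : R[i]) (x y z : hspace), ip (a *: x + y) z = a * ip x z + ip y z;
  ip_conj : forall x y : hspace, ip y x = (ip x y)^*;
  ip_ge0 : forall x : hspace, 0 <= ip x x;
  ip_eq0 : forall x : hspace, ip x x = 0 -> x = 0;
  ip_complete : forall u : nat -> hspace,
    (forall e : R, 0 < e -> exists N : nat, forall m n : nat, (N <= m)%N -> (N <= n)%N ->
        `|ip (u m - u n) (u m - u n)| < e%:C) ->
    exists x : hspace, forall e : R, 0 < e -> exists N : nat, forall n : nat, (N <= n)%N ->
        `|ip (u n - x) (u n - x)| < e%:C
}.
Arguments ip {R h}.

Definition dense_span (R : realType) (H : hilbert R) (A : H -> Prop) : Prop :=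
  forall (x : H) (e : R), 0 < e ->
    exists (m : nat) (c : 'I_m -> R[i]) (v : 'I_m -> H),
      (forall j, A (v j)) /\
      `|ip (x - \sum_(j < m) c j *: v j) (x - \sum_(j < m) c j *: v j)| < e%:C.

(* Unitary representations of a (discrete) group G on H: group homomorphism *)
(* into the linear maps preserving the inner product (these are then        *)
(* invertible, with inverse pi (g^-1), hence unitary).                       *)
Record urep (R : realType) (G : groupType) (H : hilbert R) := URep {
  rep_map :> G -> H -> H;
  rep_linear : forall (g : G) (a : R[i]) (x y : H),
      rep_map g (a *: x + y) = a *: rep_map g x + rep_map g y;
  rep_ip : forall (g : G) (x y : H), ip (rep_map g x) (rep_map g y) = ip x y;
  rep1 : forall x : H, rep_map 1%g x = x;
  repM : forall (g h : G) (x : H), rep_map (g * h)%g x = rep_map g (rep_map h x)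
}.

Definition coef (R : realType) (G : groupType) (H : hilbert R) (pi : urep G H)
  (xi : H) (g : G) : R[i] := ip (pi g xi) xi.

(* Weak containment (Fell): pi is weakly contained in the set S = {rs i}   *)
(* iff every diagonal coefficient of pi is a limit, uniformly on finite     *)
(* (= compact, G discrete) subsets of G, of finite sums of diagonal         *)
(* coefficients of representations in S.                                    *)
Definition weakly_contained (R : realType) (G : groupType) (Hp : hilbert R)
  (pi : urep G Hp) (I : Type) (Hs : I -> hilbert R) (rs : forall i, urep G (Hs i))
  : Prop :=
  forall (xi : Hp) (F : seq G) (e : R), 0 < e ->
    exists (m : nat) (idx : 'I_m -> I) (eta : forall j : 'I_m, Hs (idx j)),
      forall g : G, g \in F ->
        `|coef pi xi g - \sum_(j < m) coef (rs (idx j)) (eta j) g| < e%:C.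

(* A realization of the left regular representation lambda_G on l^2(G):     *)
(* a Hilbert space with an orthonormal family (delta_g) of dense span, and   *)
(* lambda(g) delta_h = delta_{gh}.  This determines lambda_G up to unitary   *)
(* equivalence.                                                              *)
Record regular_real (R : realType) (G : groupType) := RegularReal {
  reg_space : hilbert R;
  reg_delta : G -> reg_space;
  reg_delta_ip : forall g h : G, ip (reg_delta g) (reg_delta h) = (g == h)%:R;
  reg_dense : dense_span (fun x => exists g, x = reg_delta g);
  reg_rep : urep G reg_space;
  reg_rep_delta : forall g h : G, reg_rep g (reg_delta h) = reg_delta (g * h)%g
}.

Record trivial_real (R : realType) (G : groupType) := TrivialReal {
  triv_space : hilbert R;
  triv_vec : triv_space;
  triv_vec_ip : ip triv_vec triv_vec = 1;
  triv_dense : dense_span (fun x => x = triv_vec);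
  triv_rep : urep G triv_space;
  triv_rep_id : forall (g : G) (x : triv_space), triv_rep g x = x
}.

(* This determines the tensor product representation up to unitary equiv.  *)
Record tensor_real (R : realType) (G : groupType) (H : nat -> hilbert R)
  (om : forall n, urep G (H n)) (s : seq nat) := TensorReal {
  tens_space : hilbert R;
  tens : (forall k : 'I_(size s), H (nth 0%N s k)) -> tens_space;
  tens_ip : forall u v : (forall k : 'I_(size s), H (nth 0%N s k)),
      ip (tens u) (tens v) = \prod_(k < size s) ip (u k) (v k);
  tens_dense : dense_span (fun x => exists u, x = tens u);
  tens_rep : urep G tens_space;
  tens_rep_tens : forall (g : G) (u : forall k : 'I_(size s), H (nth 0%N s k)),
      tens_rep g (tens u) = tens (fun k => om (nth 0%N s k) g (u k))
}.

(* Index set of  {iota_G} U {omega_{i_1} (x) ... (x) omega_{i_n} : i_1 <= ... <= i_n, n >= 1}. *)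
Definition tensor_index : Type := option {s : seq nat | (s != [::]) && sorted leq s}.

Definition family_space (R : realType) (G : groupType) (H : nat -> hilbert R)
  (om : forall n, urep G (H n)) (T : trivial_real R G)
  (TR : forall s, tensor_real om s) (i : tensor_index) : hilbert R :=
  match i with
  | None => triv_space T
  | Some s => tens_space (TR (val s))
  end.

Definition family_rep (R : realType) (G : groupType) (H : nat -> hilbert R)
  (om : forall n, urep G (H n)) (T : trivial_real R G)
  (TR : forall s, tensor_real om s) (i : tensor_index) :
  urep G (family_space T TR i) :=
  match i with
  | None => triv_rep T
  | Some s => tens_rep (TR (val s))
  end.

(* Every coefficient of lambda_G is a uniform limit of coefficients of finitely
   supported vectors \sum_l c_l delta_(a_l), whose coefficients are the twisted
   translates g |-> \sum_(l,l') c_l c_l'^* delta_1(a_l'^-1 g a_l) of the indicator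
   delta_1 of the identity; and the same twisted translates of a coefficient of a
   member of the family are again coefficients of that member.  It thus suffices
   to approximate delta_1 on a finite set B by sums of coefficients of the family.
   For each b <> 1 in B, a unit vector y_b with omega(b) y_b <> y_b gives a
   coefficient phi_b with phi_b(1) = 1, |phi_b| <= 1 and phi_b(b) <> 1, so its
   power means (1/N) \sum_(i=1..N) phi_b^i are 1 at the identity and tend to 0 at
   b.  Their product over b approximates delta_1 on B, and expanding it yields a
   sum of products of powers of the phi_b, each of which is a coefficient of a
   tensor product omega_(i_1) (x) ... (x) omega_(i_n) (or of iota_G). *)

From HB Require Import structures.
From mathcomp Require Import all_boot all_order all_algebra.
From mathcomp Require Import boolp reals complex ring.
Import Order.TTheory GRing.Theory Num.Theory.
Set Implicit Arguments. Unset Strict Implicit. Unset Printing Implicit Defensive.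
Local Open Scope complex_scope.
Local Open Scope ring_scope.

Section InnerProduct.
Variables (R : realType) (H : hilbert R).
Implicit Types (a : R[i]) (x y z : H).

Lemma ipC x y : ip y x = (ip x y)^*.
Proof. exact: ip_conj. Qed.

Lemma ipDl x y z : ip (x + y) z = ip x z + ip y z.
Proof. by have := ipDZl 1 x y z; rewrite scale1r mul1r. Qed.

Lemma ip0l z : ip (0 : H) z = 0.
Proof. by apply: (addrI (ip 0 z)); rewrite -ipDl !addr0. Qed.

Lemma ipZl a x z : ip (a *: x) z = a * ip x z.
Proof. by rewrite -[a *: x]addr0 ipDZl ip0l addr0. Qed.

Lemma ipBl x y z : ip (x - y) z = ip x z - ip y z.
Proof. by rewrite ipDl -scaleN1r ipZl mulN1r. Qed.

Lemma ip_suml I (r : seq I) (P : pred I) (F : I -> H) z :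
  ip (\sum_(i <- r | P i) F i) z = \sum_(i <- r | P i) ip (F i) z.
Proof. by elim/big_rec2: _ => [|i u v _ <-]; rewrite ?ip0l ?ipDl. Qed.

Lemma ip0r z : ip z (0 : H) = 0.
Proof. by rewrite ipC ip0l conjC0. Qed.

Lemma ipZr a x z : ip z (a *: x) = a^* * ip z x.
Proof. by rewrite ipC ipZl rmorphM /= -ipC. Qed.

Lemma ipBr x y z : ip z (x - y) = ip z x - ip z y.
Proof. by rewrite ipC ipBl rmorphB /= -!ipC. Qed.

Lemma ip_sumr I (r : seq I) (P : pred I) (F : I -> H) z :
  ip z (\sum_(i <- r | P i) F i) = \sum_(i <- r | P i) ip z (F i).
Proof. by rewrite ipC ip_suml rmorph_sum /=; apply: eq_bigr => i _; rewrite -ipC. Qed.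

Lemma ip_self_conj x : (ip x x)^* = ip x x.
Proof. exact: geC0_conj (ip_ge0 x). Qed.

Lemma cauchy_schwarz x y : `|ip x y| ^+ 2 <= ip x x * ip y y.
Proof.
have [/ip_eq0 ->|yy_neq0] := eqVneq (ip y y) 0.
  by rewrite !ip0r normr0 expr0n mulr0.
have yy_gt0 : 0 < ip y y by rewrite lt0r yy_neq0 ip_ge0.
have := ip_ge0 (x - (ip x y / ip y y) *: y).
rewrite !ipBl !ipBr !ipZl !ipZr rmorphM fmorphV /= ip_self_conj -ipC.
rewrite [X in 0 <= X](_ : _ = ip x x - ip x y * ip y x / ip y y); last by field.
by rewrite subr_ge0 -(ler_pM2r yy_gt0) divfK // normCK -ipC.
Qed.

Lemma normr_ip_lt x y (c : R[i]) : 0 <= c -> ip x x * ip y y < c ^+ 2 -> `|ip x y| < c.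
Proof.
move=> c_ge0 lt_c; rewrite -(ltr_pXn2r (_ : 0 < 2)%N) ?nnegrE //.
exact: le_lt_trans (cauchy_schwarz x y) lt_c.
Qed.
End InnerProduct.

Section Representation.
Variables (R : realType) (G : groupType) (H : hilbert R) (pi : urep G H).
Implicit Types (a : R[i]) (x y : H) (g : G).

Lemma repD g x y : pi g (x + y) = pi g x + pi g y.
Proof. by have := rep_linear pi g 1 x y; rewrite !scale1r. Qed.

Lemma rep0 g : pi g 0 = 0.
Proof. by apply: (addrI (pi g 0)); rewrite -repD !addr0. Qed.

Lemma repZ g a x : pi g (a *: x) = a *: pi g x.
Proof. by rewrite -[a *: x]addr0 rep_linear rep0 addr0. Qed.

Lemma repB g x y : pi g (x - y) = pi g x - pi g y.
Proof. by rewrite repD -scaleN1r repZ scaleN1r. Qed.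

Lemma rep_sum g I (r : seq I) (P : pred I) (F : I -> H) :
  pi g (\sum_(i <- r | P i) F i) = \sum_(i <- r | P i) pi g (F i).
Proof. by elim/big_rec2: _ => [|i u v _ <-]; rewrite ?rep0 ?repD. Qed.

Lemma coef_at1 x : coef pi x 1 = ip x x.
Proof. by rewrite /coef rep1. Qed.

Lemma coef_scale a x g : coef pi (a *: x) g = a * a^* * coef pi x g.
Proof. by rewrite /coef repZ ipZl ipZr mulrA. Qed.

Lemma normr_coef_le1 x g : ip x x = 1 -> `|coef pi x g| <= 1.
Proof.
move=> x1; rewrite -(ler_pXn2r (_ : 0 < 2)%N) ?nnegrE // expr1n.
by have := cauchy_schwarz (pi g x) x; rewrite rep_ip x1 mulr1.
Qed.

Lemma coef_eq1 x g : ip x x = 1 -> coef pi x g = 1 -> pi g x = x.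
Proof.
move=> x1 cx1; apply/eqP; rewrite -subr_eq0; apply/eqP/ip_eq0.
by rewrite ipBl !ipBr rep_ip (ipC (pi g x) x) -/(coef pi x g) cx1 x1 conjC1 !subrr.
Qed.

Lemma exists_unit_coef_neq1 s x :
  pi s x <> x -> exists2 u : H, ip u u = 1 & coef pi u s != 1.
Proof.
move=> moved; have x_neq0 : x != 0 by apply: contraPneq moved => ->; rewrite rep0.
have xx_gt0 : 0 < ip x x by rewrite lt0r ip_ge0 andbT; apply: contra_neq x_neq0 => /ip_eq0.
pose c := (sqrtc (ip x x))^-1.
have c_neq0 : c != 0 by rewrite invr_eq0 sqrtc_eq0 gt_eqF.
have u1 : ip (c *: x) (c *: x) = 1.
  rewrite ipZl ipZr mulrA geC0_conj ?invr_ge0 ?sqrtc_ge0 ?ltW //.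
  by rewrite -expr2 exprVn sqr_sqrtc mulVf ?gt_eqF.
exists (c *: x) => //; apply/eqP => /(coef_eq1 u1).
by rewrite repZ => /(scalerI c_neq0).
Qed.
End Representation.

Section ComplexReal.
Variable R : realType.
Implicit Type c : R[i].

Lemma complex_ge0_real c : 0 <= c -> exists2 r : R, 0 <= r & c = r%:C.
Proof.
move=> c_ge0; have cE : c = (complex.Re c)%:C by rewrite RRe_real ?ger0_real.
by exists (complex.Re c); rewrite // -ler0c -cE.
Qed.

Lemma complex_gt0_real c : 0 < c -> exists2 r : R, 0 < r & c = r%:C.
Proof.
move=> c_gt0; have [r r_ge0 cE] := complex_ge0_real (ltW c_gt0).
by exists r; rewrite // -ltcR -cE.
Qed.

Lemma complex_archi c : 0 <= c -> exists N : nat, c < N%:R.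
Proof.
move=> /complex_ge0_real[r r_ge0 ->]; exists (Num.bound r).
by rewrite -(rmorph_nat (real_complex R)) ltcR archi_boundP.
Qed.
End ComplexReal.

Section CoefContinuity.
Variables (R : realType) (G : groupType) (H : hilbert R) (pi : urep G H).

Lemma coef_sub_expand (x d : H) g : coef pi x g - coef pi (x - d) g =
  ip (pi g x) d + ip (pi g d) x - ip (pi g d) d.
Proof. by rewrite /coef repB !ipBl !ipBr; ring. Qed.

Lemma coef_continuous (x : H) (e : R[i]) : 0 < e -> exists2 r : R, 0 < r &
  forall x', `|ip (x - x') (x - x')| < r%:C -> forall g, `|coef pi x g - coef pi x' g| < e.
Proof.
(* With [c = e / 3], each of the three terms of [coef_sub_expand] is below [c]
   by Cauchy-Schwarz once [ip d d < c ^+ 2 / (c + ip x x + 1)]. *)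
move=> e_gt0; pose c := e / 3; pose A := ip x x.
have c_gt0 : 0 < c by rewrite divr_gt0.
have A_ge0 : 0 <= A := ip_ge0 x.
have cA_gt0 : 0 < c + A + 1 by rewrite addr_gt0 ?ltr_wpDr.
have [r r_gt0 rE] : exists2 r : R, 0 < r & c ^+ 2 / (c + A + 1) = r%:C.
  by apply: complex_gt0_real; rewrite divr_gt0 ?exprn_gt0.
exists r => // x' near_x g.
have -> : x' = x - (x - x') by rewrite opprB addrC subrK.
move: near_x; set d := x - x'; set D := ip d d.
have D_ge0 : 0 <= D := ip_ge0 d.
rewrite ger0_norm // -rE => D_lt.
have AD_lt : A * D < c ^+ 2.
  apply: le_lt_trans (ler_wpM2l A_ge0 (ltW D_lt)) _.
  rewrite mulrCA gtr_pMr ?exprn_gt0 // ltr_pdivrMr // mul1r.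
  by rewrite -addrA ltr_wpDl ?ltW // ltrDl.
have D_lt_c : D < c.
  apply: lt_le_trans D_lt _.
  by rewrite ler_pdivrMr // expr2 ler_pM2l // -addrA lerDl addr_ge0.
have DD_lt : D * D < c ^+ 2 by rewrite expr2 ltr_pM.
rewrite coef_sub_expand (_ : e = c + c + c); last by rewrite /c; field.
apply: le_lt_trans (ler_normB _ _) _; rewrite ltrD //.
  apply: le_lt_trans (ler_normD _ _) _.
  by rewrite ltrD // normr_ip_lt ?ltW // !rep_ip // mulrC.
by rewrite normr_ip_lt ?ltW // rep_ip.
Qed.
End CoefContinuity.

Section TranslateForm.
Variables (R : realType) (G : groupType) (m : nat) (c : 'I_m -> R[i]) (a : 'I_m -> G).

Definition translate_form (phi : G -> R[i]) (g : G) : R[i] :=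
  \sum_(l < m) \sum_(l' < m) c l * (c l')^* * phi ((a l')^-1 * g * a l)%g.

Lemma coef_translates (H : hilbert R) (pi : urep G H) (x : H) g :
  coef pi (\sum_(l < m) c l *: pi (a l) x) g = translate_form (coef pi x) g.
Proof.
rewrite /coef rep_sum ip_suml; apply: eq_bigr => l _.
rewrite ip_sumr; apply: eq_bigr => l' _.
rewrite repZ ipZl ipZr mulrA -repM.
have -> : (g * a l = a l' * ((a l')^-1 * g * a l))%g by rewrite -!mulgA mulVKg.
by rewrite repM rep_ip.
Qed.

Lemma translate_form_sum I (r : seq I) (phi : I -> G -> R[i]) g :
  \sum_(i <- r) translate_form (phi i) g = translate_form (fun b => \sum_(i <- r) phi i b) g.
Proof.
rewrite exchange_big; apply: eq_bigr => l _; rewrite exchange_big.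
by apply: eq_bigr => l' _; rewrite mulr_sumr.
Qed.

Lemma translate_form_approx (phi psi : G -> R[i]) g (e : R[i]) :
  (forall l l', `|phi ((a l')^-1 * g * a l)%g - psi ((a l')^-1 * g * a l)%g| <= e) ->
  `|translate_form phi g - translate_form psi g| <= (\sum_(l < m) `|c l|) ^+ 2 * e.
Proof.
move=> phi_psi; have -> : (\sum_(l < m) `|c l|) ^+ 2 * e =
    \sum_(l < m) \sum_(l' < m) `|c l| * `|c l'| * e.
  rewrite expr2 !mulr_suml; apply: eq_bigr => l _.
  by rewrite mulr_sumr mulr_suml.
rewrite /translate_form -sumrB; apply: le_trans (ler_norm_sum _ _ _) _.
apply: ler_sum => l _; rewrite -sumrB; apply: le_trans (ler_norm_sum _ _ _) _.
apply: ler_sum => l' _; rewrite -mulrBr normrM normrM norm_conjC.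
by rewrite ler_wpM2l ?mulr_ge0.
Qed.
End TranslateForm.

Lemma normr_prod_lt (C : numDomainType) (I : finType) (w : I -> C) (t0 : I) (e : C) :
  (forall t, `|w t| <= 1) -> `|w t0| < e -> `|\prod_t w t| < e.
Proof.
move=> w_le1 wt0_lt; rewrite normr_prod (bigD1 t0) //=.
apply: le_lt_trans wt0_lt; rewrite ler_piMr // prodr_ile1 // => t _.
by rewrite normr_ge0 w_le1.
Qed.

Section PowerMean.
Variable C : numFieldType.
Implicit Types (z : C) (N : nat).

Definition powmean N z := N%:R^-1 * \sum_(i < N) z ^+ i.+1.

Lemma powmean1 N : (0 < N)%N -> powmean N 1 = 1.
Proof.
move=> N_gt0; rewrite /powmean (eq_bigr (fun _ => 1)) => [|i _]; last exact: expr1n.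
by rewrite sumr_const card_ord mulVf // pnatr_eq0 -lt0n.
Qed.

Lemma normr_powmean_le1 N z : `|z| <= 1 -> `|powmean N z| <= 1.
Proof.
move=> z_le1; case: N => [|N]; first by rewrite /powmean big_ord0 mulr0 normr0.
rewrite normrM normfV normr_nat ler_pdivrMl ?ltr0n // mulr1.
apply: le_trans (ler_norm_sum _ _ _) _.
have -> : N.+1%:R = \sum_(i < N.+1) (1 : C) by rewrite sumr_const card_ord.
apply: ler_sum => i _.
by rewrite normrX exprn_ile1.
Qed.

Lemma normr_powmean_mul_le N z : (0 < N)%N -> `|z| <= 1 ->
  `|powmean N z| * (N%:R * `|1 - z|) <= 2.
Proof.
move=> N_gt0 z_le1; have N_neq0 : N%:R != 0 :> C by rewrite pnatr_eq0 -lt0n.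
have geometric : (\sum_(i < N) z ^+ i.+1) * (1 - z) = z - z ^+ N.+1.
  elim: (N) => [|n IHn]; first by rewrite big_ord0 mul0r subrr.
  by rewrite big_ord_recr /= mulrDl IHn [in RHS]exprS; ring.
rewrite -normr_nat -!normrM /powmean mulrACA mulVf // mul1r geometric.
apply: le_trans (ler_normB _ _) _; rewrite -[2]/(1 + 1 : C) lerD //.
by rewrite normrX exprn_ile1.
Qed.

Lemma prod_powmean r N (z : 'I_r -> C) : \prod_t powmean N (z t) =
  N%:R^-1 ^+ r * \sum_(f : {ffun 'I_r -> 'I_N}) \prod_t z t ^+ (f t).+1.
Proof.
rewrite /powmean big_split /= prodr_const card_ord.
by rewrite (bigA_distr_bigA (fun t (i : 'I_N) => z t ^+ i.+1)).
Qed.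
End PowerMean.

Lemma exists_powmean_small (R : realType) r (z : 'I_r -> R[i]) (e : R[i]) : 0 < e ->
  (forall t, `|z t| <= 1) -> (forall t, z t != 1) ->
  exists2 N : nat, (0 < N)%N & forall t, `|powmean N (z t)| < e.
Proof.
move=> e_gt0 z_le1 z_neq1; pose K := \sum_t 2 / (e * `|1 - z t|).
have dist_gt0 t : 0 < e * `|1 - z t| by rewrite mulr_gt0 // normr_gt0 subr_eq0 eq_sym.
have K_ge0 : 0 <= K by rewrite sumr_ge0 // => t _; rewrite divr_ge0 // ltW.
have [N K_lt_N] := complex_archi K_ge0.
have N_gt0 : (0 < N)%N by rewrite -(ltr0n R[i]) (le_lt_trans K_ge0).
exists N => // t; have Nz_gt0 : 0 < N%:R * `|1 - z t|.
  by rewrite mulr_gt0 ?ltr0n // normr_gt0 subr_eq0 eq_sym.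
rewrite -(ltr_pM2r Nz_gt0); apply: le_lt_trans (normr_powmean_mul_le _ _) _ => //.
rewrite mulrCA -ltr_pdivrMr ?dist_gt0 //; apply: le_lt_trans K_lt_N.
by rewrite /K (bigD1 t) //= lerDl sumr_ge0 // => i _; rewrite divr_ge0 // ltW.
Qed.

Section TensorFamily.
Variables (R : realType) (G : groupType) (H : nat -> hilbert R)
  (om : forall n, urep G (H n)) (T : trivial_real R G) (TR : forall s, tensor_real om s).
(* Tensor factors are given by labels [t : nat], standing for the vector
   [tagged (y t)] of [H (tag (y t))], so that a vector may occur repeatedly. *)
Variable y : nat -> {n : nat & H n}.

Let key (t : nat) : nat := tag (y t).

Definition label_coef (t : nat) (g : G) : R[i] := coef (om (key t)) (tagged (y t)) g.

Lemma coef_untag (u : {n : nat & H n}) n g : tag u = n ->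
  coef (om n) (untag 0 (fun v : H n => v) u) g = coef (om (tag u)) (tagged u) g.
Proof. by case: u => n' x /= <-; rewrite /untag; case: eqP => // e; rewrite eq_axiomK. Qed.

(* The tensor product of the [y t], [t \in L], in the family member indexed by
   [map key L] ([iota_G] when [L] is empty); [L] must be sorted by [key]. *)
Definition family_vector (L : seq nat) : {i : tensor_index & family_space T TR i} :=
  match insub (map key L) with
  | Some s => Tagged (family_space T TR) (i := Some s)
      (tens (TR (val s))
         (fun k => untag 0 (fun v : H (nth 0%N (val s) k) => v) (y (nth 0%N L k))))
  | None => Tagged (family_space T TR) (i := None) (triv_vec T)
  end.

Lemma coef_family_vector L g : sorted leq (map key L) ->
  coef (family_rep T TR (tag (family_vector L))) (tagged (family_vector L)) g =
  \prod_(t <- L) label_coef t g.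
Proof.
rewrite /family_vector; case: insubP => [[s sP] _ /= -> L_sorted | ] /=.
  rewrite /coef tens_rep_tens tens_ip.
  rewrite (big_nth 0%N) big_mkord size_map; apply: eq_bigr => k _.
  exact/coef_untag/esym/nth_map.
rewrite negb_and negbK => /orP[/eqP/(congr1 size)|/negP//].
rewrite size_map => /eqP/nilP-> _.
by rewrite big_nil /coef triv_rep_id triv_vec_ip.
Qed.

Definition power_labels r N (f : {ffun 'I_r -> 'I_N}) : seq nat :=
  sort (relpre key leq) (flatten [seq nseq (f t).+1 (val t) | t <- enum 'I_r]).

Lemma sorted_power_labels r N (f : {ffun 'I_r -> 'I_N}) :
  sorted leq (map key (power_labels f)).
Proof. by rewrite sorted_map; apply: sort_sorted => t t'; apply: leq_total. Qed.

Lemma prod_power_labels r N (f : {ffun 'I_r -> 'I_N}) (F : nat -> R[i]) :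
  \prod_(t <- power_labels f) F t = \prod_(t < r) F t ^+ (f t).+1.
Proof.
rewrite (perm_big _ (permEl (perm_sort _ _))) big_flatten big_map big_enum /=.
by apply: eq_bigr => t _; rewrite big_cons big_nseq iter_mulr_1 exprS.
Qed.

Lemma family_prod_powmean r N : exists m (idx : 'I_m -> tensor_index)
    (eta : forall j, family_space T TR (idx j)), forall g,
  \sum_(j < m) coef (family_rep T TR (idx j)) (eta j) g =
  \prod_(t < r) powmean N (label_coef t g).
Proof.
pose v f := family_vector (power_labels (f : {ffun 'I_r -> 'I_N})).
pose alpha : R[i] := sqrtc (N%:R^-1 ^+ r).
have alphaJ : alpha * alpha^* = N%:R^-1 ^+ r.
  by rewrite geC0_conj ?sqrtc_ge0 ?exprn_ge0 ?invr_ge0 // -expr2 sqr_sqrtc.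
exists #|{ffun 'I_r -> 'I_N}|, (fun j => tag (v (enum_val j))).
exists (fun j => alpha *: tagged (v (enum_val j))) => g.
rewrite -(big_enum_val
  (fun f => coef (family_rep T TR (tag (v f))) (alpha *: tagged (v f)) g)).
rewrite prod_powmean -alphaJ mulr_sumr; apply: eq_bigr => f _.
by rewrite coef_scale coef_family_vector ?sorted_power_labels // prod_power_labels.
Qed.
End TensorFamily.

Section IndicatorApprox.
Variables (R : realType) (G : groupType) (H : nat -> hilbert R)
  (om : forall n, urep G (H n)) (T : trivial_real R G) (TR : forall s, tensor_real om s).
Hypothesis om_separates : forall s : G, s <> 1%g -> exists (n : nat) (x : H n), om n s x <> x.

Lemma exists_separating_state (b : G) : exists y : {n : nat & H n}, b != 1%g ->
  ip (tagged y) (tagged y) = 1 /\ coef (om (tag y)) (tagged y) b != 1.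
Proof.
have [->|b_neq1] := eqVneq b 1%g.
  by exists (Tagged H (0 : H 0%N)).
have [n [x /exists_unit_coef_neq1[u u1 coef_neq1]]] := om_separates (elimN eqP b_neq1).
by exists (Tagged H u).
Qed.

Lemma family_approx_indicator1 (B : seq G) (e : R[i]) : 0 < e ->
  exists m (idx : 'I_m -> tensor_index) (eta : forall j, family_space T TR (idx j)),
    forall b, b \in B ->
      `|(b == 1%g)%:R - \sum_(j < m) coef (family_rep T TR (idx j)) (eta j) b| < e.
Proof.
move=> e_gt0; have [Y Y_sep] := choice exists_separating_state.
pose B' := [seq b <- B | b != 1%g]; pose r := size B'.
pose y t := Y (nth 1%g B' t).
have y_sep (t : 'I_r) : ip (tagged (y t)) (tagged (y t)) = 1 /\
    label_coef om y t (nth 1%g B' t) != 1.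
  by apply: Y_sep; have := mem_nth 1%g (ltn_ord t); rewrite mem_filter => /andP[].
have label_le1 (t : 'I_r) g : `|label_coef om y t g| <= 1.
  by apply: normr_coef_le1; case: (y_sep t).
have [N N_gt0 small] := exists_powmean_small e_gt0 (fun t => label_le1 t _)
  (fun t => (y_sep t).2).
have [m [idx [eta sumE]]] := family_prod_powmean T TR y r N.
exists m, idx, eta => b bB; rewrite sumE.
have [->|b_neq1] := eqVneq b 1%g.
  rewrite big1 ?subrr ?normr0 // => t _.
  by rewrite /label_coef coef_at1; case: (y_sep t) => -> _; rewrite powmean1.
have bB' : b \in B' by rewrite mem_filter b_neq1.
pose t0 := Ordinal (etrans (index_mem b B') bB').
rewrite sub0r normrN; apply: (normr_prod_lt (t0 := t0)) => [t|].
  exact/normr_powmean_le1/label_le1.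
by have := small t0; rewrite /= nth_index.
Qed.
End IndicatorApprox.

Section RegularCombination.
Variables (R : realType) (G : groupType) (L : regular_real R G).
Variables (I : Type) (Hs : I -> hilbert R) (rs : forall i, urep G (Hs i)).

Lemma coef_reg_delta1 (b : G) : coef (reg_rep L) (reg_delta L 1) b = (b == 1%g)%:R.
Proof. by rewrite /coef reg_rep_delta mulg1 reg_delta_ip. Qed.

Lemma coef_reg_combination_approx M m (c : 'I_M -> R[i]) (a : 'I_M -> G)
    (idx : 'I_m -> I) (eta : forall j, Hs (idx j)) (g : G) (e : R[i]) :
  (forall l l', `|((a l')^-1 * g * a l == 1)%g%:R -
      \sum_(j < m) coef (rs (idx j)) (eta j) ((a l')^-1 * g * a l)%g| <= e) ->
  `|coef (reg_rep L) (\sum_(l < M) c l *: reg_delta L (a l)) g -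
    \sum_(j < m) coef (rs (idx j)) (\sum_(l < M) c l *: rs (idx j) (a l) (eta j)) g|
  <= (\sum_(l < M) `|c l|) ^+ 2 * e.
Proof.
move=> delta1_near; under eq_bigr => l _ do rewrite -[a l]mulg1 -reg_rep_delta.
rewrite coef_translates; under eq_bigr do rewrite coef_translates.
rewrite translate_form_sum; apply: translate_form_approx => l l'.
by rewrite coef_reg_delta1; apply: delta1_near.
Qed.
End RegularCombination.

Theorem proposition3p7 (R : realType) (G : groupType)
  (G_countable : exists f : G -> nat, injective f)
  (H : nat -> hilbert R) (om : forall n : nat, urep G (H n))
  (om_separates : forall s : G, s <> 1%g -> exists (n : nat) (x : H n), om n s x <> x)
  (L : regular_real R G) (T : trivial_real R G)
  (TR : forall s : seq nat, tensor_real om s) :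
  weakly_contained (reg_rep L) (family_rep T TR).
Proof.
move=> xi F e e_gt0; pose eps : R[i] := e%:C / 2.
have eps_gt0 : 0 < eps by rewrite divr_gt0 ?ltcR.
have [d d_gt0 coef_near] := coef_continuous (reg_rep L) xi eps_gt0.
have [M [c [v [v_delta xi_near]]]] := reg_dense xi d_gt0.
have [a va] := choice v_delta.
have vE : \sum_(l < M) c l *: v l = \sum_(l < M) c l *: reg_delta L (a l).
  by apply: eq_bigr => l _; rewrite va.
rewrite vE in xi_near; pose kappa := (\sum_(l < M) `|c l|) ^+ 2.
have kappa_ge0 : 0 <= kappa by rewrite exprn_ge0 ?sumr_ge0.
pose B := [seq ((a lk.2)^-1 * g * a lk.1)%g | g <- F, lk <- enum {: 'I_M * 'I_M}].
have [|m [idx [eta approx]]] :=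
  family_approx_indicator1 T TR om_separates B (e := eps / (kappa + 1)).
  by rewrite divr_gt0 ?ltr_wpDl.
exists m, idx, (fun j => \sum_(l < M) c l *: family_rep T TR (idx j) (a l) (eta j)).
move=> g gF.
apply: le_lt_trans
  (ler_distD (coef (reg_rep L) (\sum_(l < M) c l *: reg_delta L (a l)) g) _ _) _.
rewrite (splitr e%:C); apply: ltr_leD (coef_near _ xi_near g) _.
apply: le_trans (coef_reg_combination_approx L c (e := eps / (kappa + 1)) _) _.
  by move=> l l'; apply/ltW/approx/allpairsP; exists (g, (l, l')); rewrite mem_enum.
by rewrite mulrCA ler_piMr ?ltW // -/kappa ltr_pdivrMr ?ltr_wpDl // mul1r ltrDl.
Qed.
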